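(* Let $G$ be a finite connected graph with a real structure. Then $s(G)\equiv g(G)+1 \pmod 2$ and $0\le s(G)\le g(G)+1$; moreover $s(G)\neq g(G)+1$ if $a(G)=1$, and $s(G)\neq 0$ if $a(G)=0$.
   Context: A finite graph $G$ consists of a finite vertex set $V(G)$, a finite edge set $E(G)$ and an incidence function $\psi$ assigning to each edge $e$ a set $\psi(e)\subset V(G)$ of one or two vertices (its ends); loops ($|\psi(e)|=1$) and multiple edges are allowed. A walk is a sequence $v_0e_0v_1\cdots e_{n-1}v_n$ with $\psi(e_i)=\{v_i,v_{i+1}\}$; $G$ is connected if any two vertices are joined by a walk. The genus of a graph $H$ is $g(H)=c(H)+|E(H)|-|V(H)|$, where $c(H)$ is its number of connected components. A real structure on $G$ is a pair of involutions $\iota_V$ of $V(G)$ and $\iota_E$ of $E(G)$ with $\psi(\iota_E(e))=\iota_V(\psi(e))$ for all $e$; write $\overline v=\iota_V(v)$, $\overline e=\iota_E(e)$. A vertex $v$ is real if $\overline v=v$; $V_{\mathbb R}(G)$ is the set of real vertices. An edge $e$ is real if $\overline e=e$; a real edge is isolated if $\psi(e)\not\subset V_{\mathbb R}(G)$ and non-isolated otherwise. The real locus graph $G(\mathbb R)$ is the subgraph with vertex set $V_{\mathbb R}(G)$ and edge set the non-isolated real edges. Let $e^i(G)$ be the number of isolated real edges and $G(\mathbb R)_1,\dots,G(\mathbb R)_{s'}$ the connected components of $G(\mathbb R)$ (possibly $s'=0$). Define $s(G)=e^i(G)+\sum_{i=1}^{s'}\bigl(g(G(\mathbb R)_i)+1\bigr)$.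 Define $a(G)=1$ if there exist a non-real vertex $v$ and a walk in $G$ with ends $v$ and $\overline v$ containing neither a real vertex nor a real edge; otherwise $a(G)=0$. *)

From mathcomp Require Import all_boot all_order all_algebra.
From mathcomp Require Import boolp.
Set Implicit Arguments. Unset Strict Implicit. Unset Printing Implicit Defensive.
Import Order.TTheory GRing.Theory Num.Theory.

(* A finite graph: finite vertex type V, finite edge type E, and an
   incidence function psi : E -> {set V} with 1 or 2 ends per edge
   (loops and multiple edges allowed).  Subgraphs are described by a
   vertex predicate PV and an edge predicate PE. *)

Definition incidence_ok (V E : finType) (psi : E -> {set V}) : Prop :=
  forall e, 0 < #|psi e| <= 2.

(* walk v0 e0 v1 ... e_{n-1} v_n, encoded as v0 and the list [(e0,v1);...],
   all vertices satisfying PV and all edges satisfying PE, with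
   psi e_i = {v_i, v_{i+1}}. *)
Fixpoint walk_ok (V E : finType) (psi : E -> {set V}) (PV : pred V) (PE : pred E)
    (v : V) (s : seq (E * V)) : bool :=
  match s with
  | [::] => PV v
  | (e, w) :: s' => [&& PV v, PE e, psi e == [set v; w] & walk_ok psi PV PE w s']
  end.

Definition joined (V E : finType) (psi : E -> {set V}) (PV : pred V) (PE : pred E)
    (u v : V) : Prop :=
  exists s : seq (E * V), walk_ok psi PV PE u s /\ last u (unzip2 s) = v.

Definition joinedb (V E : finType) (psi : E -> {set V}) (PV : pred V) (PE : pred E)
    (u v : V) : bool := `[< joined psi PV PE u v >].

Definition connected (V E : finType) (psi : E -> {set V}) : Prop :=
  (exists v : V, True) /\ forall u v : V, joined psi predT predT u v.

Definition components (V E : finType) (psi : E -> {set V}) (PV : pred V) (PE : pred E)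
    : {set {set V}} :=
  [set [set w | joinedb psi PV PE v w] | v in PV].

Definition n_comp (V E : finType) (psi : E -> {set V}) (PV : pred V) (PE : pred E) : nat :=
  #|components psi PV PE|.

Definition genus (V E : finType) (psi : E -> {set V}) (PV : pred V) (PE : pred E) : int :=
  (n_comp psi PV PE)%:Z + (#|PE|)%:Z - (#|PV|)%:Z.

Definition real_structure (V E : finType) (psi : E -> {set V})
    (iV : V -> V) (iE : E -> E) : Prop :=
  [/\ involutive iV, involutive iE & forall e, psi (iE e) = iV @: psi e].

Definition real_vertex (V : finType) (iV : V -> V) : pred V := fun v => iV v == v.
Definition real_edge (E : finType) (iE : E -> E) : pred E := fun e => iE e == e.

Definition nonisolated_real_edge (V E : finType) (psi : E -> {set V})
    (iV : V -> V) (iE : E -> E) : pred E :=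
  fun e => real_edge iE e && (psi e \subset real_vertex iV).

Definition isolated_real_edge (V E : finType) (psi : E -> {set V})
    (iV : V -> V) (iE : E -> E) : pred E :=
  fun e => real_edge iE e && ~~ (psi e \subset real_vertex iV).

Definition e_iso (V E : finType) (psi : E -> {set V}) (iV : V -> V) (iE : E -> E) : nat :=
  #|isolated_real_edge psi iV iE|.

(* the real locus graph G(R) has vertex predicate real_vertex iV and edge
   predicate nonisolated_real_edge; a component with vertex set C is the
   subgraph (C, edges of G(R) with ends in C). *)
Definition comp_genus (V E : finType) (psi : E -> {set V}) (iV : V -> V) (iE : E -> E)
    (C : {set V}) : int :=
  genus psi (mem C) (fun e => nonisolated_real_edge psi iV iE e && (psi e \subset C)).

Definition s_inv (V E : finType) (psi : E -> {set V}) (iV : V -> V) (iE : E -> E) : int :=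
  (e_iso psi iV iE)%:Z +
  \sum_(C in components psi (real_vertex iV) (nonisolated_real_edge psi iV iE))
     (comp_genus psi iV iE C + 1).

Definition g_inv (V E : finType) (psi : E -> {set V}) : int := genus psi predT predT.

Definition a_inv (V E : finType) (psi : E -> {set V}) (iV : V -> V) (iE : E -> E) : nat :=
  if `[< exists v : V, iV v != v /\
        joined psi (predC (real_vertex iV)) (predC (real_edge iE)) v (iV v) >]
  then 1 else 0.

From Pilot Require Import Defs.
From mathcomp Require Import all_boot all_order all_algebra.
From mathcomp Require Import boolp zify.
Import Order.TTheory GRing.Theory Num.Theory.
Set Implicit Arguments. Unset Strict Implicit. Unset Printing Implicit Defensive.

(* Let r be the number of real vertices, c the number of components of G(R),
   e_N and e_I the numbers of non-isolated and isolated real edges, and 2 h_V,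
   2 h_E the numbers of non-real vertices and edges.  Since every component of
   G(R) is connected, s = e_I + e_N + 2c - r >= 0, while g + 1 = e_N + e_I + 2 h_E
   - r - 2 h_V + 2; hence g + 1 - s = 2 (h_E + 1 - c - h_V).  Collapsing each
   component of G(R) to a point and identifying conjugate vertices and edges
   gives a connected quotient graph with c + h_V vertices and at most h_E edges,
   so c + h_V <= h_E + 1.  If a(G) = 1, a shortest walk from some v to its
   conjugate avoiding real vertices and edges crosses the conjugacy class of its
   first edge only once, so the quotient stays connected without that edge and
   c + h_V <= h_E.  If a(G) = 0 and s = 0 then c = e_I = 0, so G has no real
   vertex or edge at all and connectedness forces a(G) = 1. *)

Lemma incidence_pair (V E : finType) (psi : E -> {set V}) e :
  incidence_ok psi -> exists a b, psi e = [set a; b].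
Proof.
move=> /(_ e) /andP[h0 h2].
have : (#|psi e| == 1) || (#|psi e| == 2) by move: h0 h2; case: #|psi e| => [|[|[|n]]].
case/orP=> [/cards1P [a ->]|/cards2P [a [b [_ ->]]]]; last by exists a, b.
by exists a, a; rewrite setUid.
Qed.

Section Walks.

Variables (V E : finType) (psi : E -> {set V}) (PV : pred V) (PE : pred E).

Lemma walk_head u s : walk_ok psi PV PE u s -> PV u.
Proof. by case: s => [|[e w] s] //= /and4P[]. Qed.

Lemma walk_last u s : walk_ok psi PV PE u s -> PV (last u (unzip2 s)).
Proof. by elim: s u => [|[e w] s IH] u //= /and4P[_ _ _ /IH]. Qed.

Lemma walk_cat u s1 s2 :
  walk_ok psi PV PE u (s1 ++ s2) =
  walk_ok psi PV PE u s1 && walk_ok psi PV PE (last u (unzip2 s1)) s2.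
Proof.
elim: s1 u => [|[e w] s IH] u /=; last by rewrite IH !andbA.
by apply/idP/andP => [h|[]//]; split=> //; apply: walk_head h.
Qed.

Lemma joined_refl u : PV u -> joined psi PV PE u u.
Proof. by move=> hu; exists [::]. Qed.

Lemma joined_trans u v w :
  joined psi PV PE u v -> joined psi PV PE v w -> joined psi PV PE u w.
Proof.
move=> [s1 [h1 <-]] [s2 [h2 <-]]; exists (s1 ++ s2).
by rewrite walk_cat h1 h2 /unzip2 map_cat last_cat.
Qed.

Lemma joined_edge u v e :
  PV u -> PV v -> PE e -> psi e = [set u; v] -> joined psi PV PE u v.
Proof. by move=> hu hv he hp; exists [:: (e, v)]; rewrite /= hu hv he hp eqxx. Qed.

Lemma joined_mem u v : joined psi PV PE u v -> PV u /\ PV v.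
Proof. by move=> [s [hs <-]]; split; [apply: walk_head hs | apply: walk_last hs]. Qed.

Lemma joined_sym u v : joined psi PV PE u v -> joined psi PV PE v u.
Proof.
move=> [s [hs <-]]; elim: s u hs => [|[e w] s IH] u /=; first exact: joined_refl.
case/and4P=> hu he /eqP hp hw; apply: joined_trans (IH _ hw) _.
by apply: (joined_edge _ _ he) => //; [apply: walk_head hw | rewrite hp setUC].
Qed.

Lemma joined_pair u v x y :
  joined psi PV PE u v -> x \in [set u; v] -> y \in [set u; v] -> joined psi PV PE x y.
Proof.
move=> J; have [hu hv] := joined_mem J.
by rewrite !inE => /orP[]/eqP-> /orP[]/eqP->;
  [apply: joined_refl | apply: J | apply: joined_sym | apply: joined_refl].
Qed.

Lemma joined_sub (PV' : pred V) (PE' : pred E) u v :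
  subpred PV PV' -> subpred PE PE' -> joined psi PV PE u v -> joined psi PV' PE' u v.
Proof.
move=> sV sE [s [hs hl]]; exists s; split=> //; elim: s u hs {hl} => [|[e w] s IH] u /=.
  exact: sV.
by case/and4P=> /sV-> /sE-> -> /IH.
Qed.

Lemma walk_avoid (X : pred E) u s :
  walk_ok psi PV PE u s -> ~~ has (fun p => X p.1) s ->
  walk_ok psi PV (fun e => PE e && ~~ X e) u s.
Proof.
elim: s u => [|[e w] s IH] u //= /and4P[-> -> -> /IH hw].
by rewrite negb_or => /andP[-> /hw].
Qed.

Lemma walk_distance r : exists D : V -> nat, forall x, joined psi PV PE r x ->
  (exists2 s, walk_ok psi PV PE r s /\ last r (unzip2 s) = x & size s = D x) /\
  (forall s, walk_ok psi PV PE r s -> last r (unzip2 s) = x -> D x <= size s).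
Proof.
suff /choice[D HD] : forall x, exists n, joined psi PV PE r x ->
    (exists2 s, walk_ok psi PV PE r s /\ last r (unzip2 s) = x & size s = n) /\
    (forall s, walk_ok psi PV PE r s -> last r (unzip2 s) = x -> n <= size s).
  by exists D.
move=> x; case: (pselect (joined psi PV PE r x)) => [[s0 hs0]|hn]; last by exists 0.
pose P n := `[< exists2 s, walk_ok psi PV PE r s /\ last r (unzip2 s) = x & size s = n >].
have exP : exists n, P n by exists (size s0); apply/asboolP; exists s0.
have [m /asboolP[s hs hsz] hmin] := ex_minnP exP.
by exists m => _; split; [exists s | move=> t ht htl; apply/hmin/asboolP; exists t].
Qed.

Lemma card_le_parent_edges (D : V -> nat) r :
  (forall x, PV x -> x != r -> exists e y, [/\ PE e, psi e = [set y; x] & D y < D x]) ->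
  #|PV| <= #|PE|.+1.
Proof.
move=> hpar.
pose parent x := [pick e | PE e && [exists y, (psi e == [set y; x]) && (D y < D x)]].
have parentP x : PV x -> x != r ->
    exists2 e, parent x = Some e & PE e /\ exists2 y, psi e = [set y; x] & D y < D x.
  move=> hx hxr; rewrite /parent; case: pickP => [e /andP[he /existsP[y /andP[/eqP hy hD]]]|none].
    by exists e => //; split => //; exists y.
  have [e [y [he hy hD]]] := hpar x hx hxr.
  by move: (none e); rewrite he /=; case/existsP; exists y; rewrite hy eqxx.
set A := [set x in PV] :\ r.
have inj_parent : {in A &, injective parent}.
  move=> x x'; rewrite !inE => /andP[hxr hx] /andP[hxr' hx'].
  have [e -> [_ [y hy hD]]] := parentP x hx hxr.
  have [e' -> [_ [y' hy' hD']]] := parentP x' hx' hxr'.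
  case=> ee; subst e'; apply/eqP; apply: contraT => hneq.
  have /set2P[xy'|xx'] : x \in [set y'; x'] by rewrite -hy' hy set22.
    have /set2P[x'y|x'x] : x' \in [set y; x] by rewrite -hy hy' set22.
      by subst y y'; lia.
    by rewrite x'x eqxx in hneq.
  by rewrite xx' eqxx in hneq.
have -> : #|PE| = #|Some @: [set e in PE]| by rewrite card_imset ?cardsE //; exact: Some_inj.
have card_A : #|PV| <= #|A|.+1.
  by rewrite -cardsE (cardsD1 r) addnC -addn1 leq_add2l leq_b1.
apply: (leq_trans card_A); rewrite ltnS -(card_in_imset inj_parent).
apply/subset_leq_card/subsetP => o /imsetP[x]; rewrite !inE => /andP[hxr hx] ->.
by have [e -> [he _]] := parentP x hx hxr; apply: imset_f; rewrite inE.
Qed.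

Lemma spanning_card_le r :
  (forall x, PV x -> joined psi PV PE r x) -> #|PV| <= #|PE|.+1.
Proof.
move=> hr; have [D HD] := walk_distance r.
apply: (@card_le_parent_edges D r) => x hx hxr.
have [[s [hs hl] hsz] _] := HD x (hr x hx).
case/lastP: s hs hl hsz => [|s' [e w]]; first by move=> _ /= hl; rewrite hl eqxx in hxr.
rewrite -cats1 walk_cat /unzip2 map_cat last_cat /= => /andP[hs' /and4P[_ he /eqP hp _]] hw.
subst w; rewrite size_cat /= addn1 => hsz; exists e, (last r (unzip2 s')); split=> //.
by rewrite -hsz ltnS; apply: (HD _ (ex_intro _ s' (conj hs' erefl))).2.
Qed.

Definition component v := [set w | joinedb psi PV PE v w].

Lemma mem_component v w : reflect (joined psi PV PE v w) (w \in component v).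
Proof. by rewrite inE; apply: asboolP. Qed.

Lemma component_id v : PV v -> v \in component v.
Proof. by move=> hv; apply/mem_component/joined_refl. Qed.

Lemma component_eq u v : joined psi PV PE u v -> component u = component v.
Proof.
move=> huv; apply/setP => w; apply/mem_component/mem_component => h.
  exact: joined_trans (joined_sym huv) h.
exact: joined_trans huv h.
Qed.

Lemma n_comp_eq1 r :
  PV r -> (forall x, PV x -> joined psi PV PE r x) -> Defs.n_comp psi PV PE = 1.
Proof.
move=> hr hall; apply/eqP/cards1P; exists (component r); apply/setP => C; rewrite inE.
apply/imsetP/eqP => [[v hv ->]|->]; last by exists r.
exact/component_eq/joined_sym/hall.
Qed.

End Walks.

Lemma joined_map (V E : finType) (psi psi' : E -> {set V}) (PV PV' : pred V)
    (PE PE' : pred E) (f : V -> V) u v :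
  (forall x, PV' (f x)) ->
  (forall e a b, PE e -> psi e = [set a; b] -> joined psi' PV' PE' (f a) (f b)) ->
  joined psi PV PE u v -> joined psi' PV' PE' (f u) (f v).
Proof.
move=> hf hst [s [hs <-]]; elim: s u hs => [|[e w] s IH] u /=.
  by move=> _; apply/joined_refl/hf.
by case/and4P=> _ he /eqP hp /IH; apply: joined_trans; apply: hst hp.
Qed.

Section Components.

Variables (V E : finType) (psi : E -> {set V}) (PV : pred V) (PE : pred E).

Lemma sum_components_count (T : finType) (Q : pred T) (F : T -> {set V}) :
  (forall y, Q y -> exists2 a, PV a & a \in F y /\ F y \subset component psi PV PE a) ->
  \sum_(C in components psi PV PE) #|[pred y | Q y && (F y \subset C)]| = #|Q|.
Proof.
move=> hF; under eq_bigr => C _ do rewrite -sum1_card big_mkcond /=.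
rewrite exchange_big /= -sum1_card [RHS]big_mkcond /=; apply: eq_bigr => y _.
rewrite -[y \in Q]/(Q y); case hy: (Q y); last by rewrite big1 // => C _; rewrite inE hy.
have [a ha [haF hFa]] := hF y hy.
rewrite (bigD1 (component psi PV PE a)) /=; last exact: imset_f.
rewrite inE hy hFa big1 ?addn0 // => _ /andP[/imsetP[v hv ->] hne].
rewrite inE hy; case: ifP => // /subsetP /(_ a haF) /mem_component hva.
by case/eqP: hne; apply: component_eq hva.
Qed.

Lemma sum_card_components : \sum_(C in components psi PV PE) #|C| = #|PV|.
Proof.
rewrite -(@sum_components_count _ PV (fun x => [set x])) => [|x hx]; last first.
  by exists x => //; rewrite sub1set set11 component_id.
apply: eq_bigr => _ /imsetP[v hv ->]; apply: eq_card => x.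
rewrite inE -topredE /= sub1set inE; apply/idP/andP => [hx|[]//]; split=> //.
by case/asboolP/joined_mem: hx.
Qed.

Lemma sum_card_component_edges :
  incidence_ok psi -> (forall e, PE e -> psi e \subset PV) ->
  \sum_(C in components psi PV PE) #|[pred e | PE e && (psi e \subset C)]| = #|PE|.
Proof.
move=> Hpsi hPV; apply: sum_components_count => e he.
have [a [b hab]] := incidence_pair e Hpsi.
have /subsetP := hPV e he; rewrite hab => hsub.
have ha : PV a by apply: hsub; rewrite set21.
have hb : PV b by apply: hsub; rewrite set22.
exists a => //; split; first exact: set21.
apply/subsetP => x /set2P[]->; apply/mem_component; first exact: joined_refl.
exact: joined_edge he hab.
Qed.

Lemma joined_in_component v x : joined psi PV PE v x ->
  joined psi (mem (component psi PV PE v))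
    (fun e => PE e && (psi e \subset component psi PV PE v)) v x.
Proof.
set C := component psi PV PE v.
have walkC s u : u \in C -> walk_ok psi PV PE u s ->
    walk_ok psi (mem C) (fun e => PE e && (psi e \subset C)) u s.
  elim: s u => [|[e w] s IH] u huC //= /and4P[_ he /eqP hp hw].
  have hvu : joined psi PV PE v u by apply/mem_component.
  have hwC : w \in C.
    apply/mem_component/(joined_trans hvu).
    exact: joined_edge (joined_mem hvu).2 (walk_head hw) he hp.
  apply/and4P; split=> //; last exact: IH.
    by rewrite he; apply/subsetP => y; rewrite hp => /set2P[]->.
  by rewrite hp.
by move=> [s [hs <-]]; exists s; split=> //; apply: walkC (hs); apply/component_id/(walk_head hs).
Qed.

Lemma component_n_comp C : C \in components psi PV PE ->
  Defs.n_comp psi (mem C) (fun e => PE e && (psi e \subset C)) = 1.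
Proof.
case/imsetP => v hv ->; rewrite -/(component psi PV PE v).
apply: (n_comp_eq1 (r := v)) => [|x /mem_component]; first exact: component_id.
exact: joined_in_component.
Qed.

Lemma component_card_le C : C \in components psi PV PE ->
  #|C| <= #|fun e => PE e && (psi e \subset C)|.+1.
Proof.
case/imsetP => v hv ->; rewrite -/(component psi PV PE v).
by apply: (spanning_card_le (r := v)) => x /mem_component; apply: joined_in_component.
Qed.

End Components.

Section PairReps.

Variables (T : finType) (f : T -> T).
Hypothesis fK : involutive f.

Definition pair_reps : {set T} :=
  [set x | (f x != x) && (enum_rank x < enum_rank (f x))].

Definition pair_rep x := if x \in pair_reps then x else f x.

Lemma pair_reps_moved x : x \in pair_reps -> f x != x.
Proof. by rewrite inE => /andP[]. Qed.

Lemma pair_repsN x : x \in pair_reps -> f x \notin pair_reps.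
Proof.
rewrite !inE fK => /andP[_ h]; apply/negP => /andP[_ h'].
by have := ltn_trans h h'; rewrite ltnn.
Qed.

Lemma pair_reps_either x : f x != x -> (x \in pair_reps) || (f x \in pair_reps).
Proof.
move=> hx; rewrite !inE fK hx eq_sym hx /= -neq_ltn.
by apply: contra hx => /eqP/val_inj h; rewrite -(enum_rank_inj h).
Qed.

Lemma pair_rep_in x : f x != x -> pair_rep x \in pair_reps.
Proof. by rewrite /pair_rep; case: ifP => // hx /pair_reps_either; rewrite hx. Qed.

Lemma pair_rep_inv x : pair_rep (f x) = pair_rep x.
Proof.
rewrite /pair_rep fK; have [hx|hx] := boolP (x \in pair_reps).
  by rewrite (negbTE (pair_repsN hx)).
case: ifP => // hfx; apply/esym/eqP; apply: contraNT hx.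
by move/pair_reps_either; rewrite hfx orbF.
Qed.

Lemma card_moved : #|[pred x | f x != x]| = 2 * #|pair_reps|.
Proof.
set S := [set x | f x != x]; have -> : #|[pred x | f x != x]| = #|S| by rewrite cardsE.
have sub : pair_reps \subset S by apply/subsetP => x /pair_reps_moved; rewrite !inE.
rewrite -(cardsID pair_reps) (setIidPr sub) mul2n -addnn; congr (_ + _).
rewrite -(card_imset pair_reps (can_inj fK)); apply: eq_card => y.
rewrite in_setD [y \in S]inE; apply/andP/imsetP => [[hyR hy]|[x hx ->]].
  by exists (f y); rewrite ?fK //; move: (pair_reps_either hy); rewrite (negbTE hyR).
by rewrite pair_repsN // fK eq_sym pair_reps_moved.
Qed.

End PairReps.

Section Quotient.

Variables (V E : finType) (psi : E -> {set V}) (iV : V -> V) (iE : E -> E).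
Hypotheses (iVK : involutive iV) (iEK : involutive iE)
  (psi_conj : forall e, psi (iE e) = iV @: psi e).

Local Notation RV := (real_vertex iV).
Local Notation RE := (nonisolated_real_edge psi iV iE).

(* The quotient graph is realised on V itself: [qmap] sends a real vertex to a
   chosen point of its component in G(R) and a non-real vertex to the chosen
   member of its conjugate pair; its vertices are the fixed points of [qmap] and
   its edges the chosen members of conjugate pairs of non-real edges, minus [X]. *)
Definition qmap x :=
  if iV x == x then odflt x [pick y in component psi RV RE x] else pair_rep iV x.

Definition qverts : pred V := fun x => qmap x == x.
Definition qends e := qmap @: psi e.
Definition qedges (X : pred E) : pred E := fun e => (e \in pair_reps iE) && ~~ X e.

Local Notation qjoined X := (joined qends qverts (qedges X)).

Lemma qmap_real x : iV x == x -> qmap x \in component psi RV RE x.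
Proof.
move=> hx; rewrite /qmap hx; case: pickP => [y //|none].
by have := none x; rewrite component_id.
Qed.

Lemma qmap_joined x y : joined psi RV RE x y -> qmap x = qmap y.
Proof.
move=> hxy; have [hx hy] := joined_mem hxy.
have ex : iV x == x := hx; have ey : iV y == y := hy.
rewrite /qmap ex ey (component_eq hxy); case: pickP => // none.
by have := none y; rewrite component_id.
Qed.

Lemma qmap_conj x : qmap (iV x) = qmap x.
Proof.
rewrite /qmap iVK; case: (eqVneq (iV x) x) => [-> //|hx].
exact: pair_rep_inv.
Qed.

Lemma qmap_nonreal x : iV x != x -> qmap x \in pair_reps iV.
Proof. by move=> hx; rewrite /qmap (negbTE hx) pair_rep_in. Qed.

Lemma qverts_qmap x : qverts (qmap x).
Proof.
apply/eqP; case: (eqVneq (iV x) x) => hx.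
  by apply/esym/qmap_joined/mem_component/qmap_real/eqP.
have hrep := qmap_nonreal hx.
by rewrite {1}/qmap (negbTE (pair_reps_moved hrep)) /pair_rep hrep.
Qed.

Lemma real_edge_ends e a b :
  iE e = e -> psi e = [set a; b] -> (RV a && RV b) || (b == iV a).
Proof.
move=> he hab.
have conj_mem x : x \in [set a; b] -> iV x \in [set a; b].
  by rewrite -hab -{2}he psi_conj; apply: imset_f.
have /set2P[ha|ab] := conj_mem a (set21 a b); last by rewrite ab eqxx orbT.
have /set2P[ba|hb] := conj_mem b (set22 a b); last by rewrite /real_vertex ha hb !eqxx.
by rewrite -ba iVK eqxx orbT.
Qed.

Lemma qmap_real_edge e a b : iE e = e -> psi e = [set a; b] -> qmap a = qmap b.
Proof.
move=> he hab; case/orP: (real_edge_ends he hab) => [/andP[ha hb]|/eqP ->].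
  apply/qmap_joined/(joined_edge ha hb _ hab).
  by rewrite /nonisolated_real_edge /real_edge he eqxx hab; apply/subsetP => x /set2P[]->.
by rewrite qmap_conj.
Qed.

Lemma qmap_edge (X : pred E) e a b :
  (forall e, X (iE e) = X e) -> ~~ X e -> psi e = [set a; b] ->
  qjoined X (qmap a) (qmap b).
Proof.
move=> Xconj hXe hab; case: (eqVneq (iE e) e) => he.
  by rewrite (qmap_real_edge he hab); apply/joined_refl/qverts_qmap.
apply: (joined_edge (qverts_qmap a) (qverts_qmap b) (e := pair_rep iE e)).
  by rewrite /qedges pair_rep_in //= /pair_rep; case: ifP; rewrite ?Xconj.
rewrite /qends /pair_rep; case: ifP => _; rewrite ?psi_conj -?imset_comp hab;
  by rewrite imsetU1 imset_set1 //= !qmap_conj.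
Qed.

Local Notation NV := (predC (real_vertex iV)).
Local Notation NE := (predC (real_edge iE)).

Definition edge_orbit e0 : pred E := fun e => (e == e0) || (e == iE e0).

Lemma edge_orbit_conj e0 e : edge_orbit e0 (iE e) = edge_orbit e0 e.
Proof. by rewrite /edge_orbit -{1}(iEK e0) !(inj_eq (can_inj iEK)) orbC. Qed.

Lemma quotient_card_le (X : pred E) :
  connected psi -> (forall e, X (iE e) = X e) ->
  (forall e a b, X e -> psi e = [set a; b] -> qjoined X (qmap a) (qmap b)) ->
  #|qverts| <= #|qedges X|.+1.
Proof.
move=> [[v _] hconn] Xconj hX.
apply: (spanning_card_le (psi := qends) (r := qmap v)) => x /eqP <-.
apply: joined_map (hconn v x) => [|e a b _ hab]; first exact: qverts_qmap.
by case: (boolP (X e)) => hXe; [apply: hX hab | apply: qmap_edge hab].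
Qed.

Lemma card_qverts : #|components psi RV RE| + #|pair_reps iV| <= #|qverts|.
Proof.
set R := qmap @: [set x | RV x].
have R_real y : y \in R -> RV y.
  by case/imsetP => x; rewrite inE => hx ->; case/mem_component/joined_mem: (qmap_real hx).
have card_comps : #|components psi RV RE| <= #|R|.
  apply: leq_trans (leq_imset_card (component psi RV RE) R).
  apply/subset_leq_card/subsetP => _ /imsetP[v hv ->]; apply/imsetP.
  exists (qmap v); first by apply: imset_f; rewrite inE.
  exact/component_eq/mem_component/qmap_real.
have RP0 : R :&: pair_reps iV = set0.
  apply/setP => y; rewrite in_setI in_set0.
  by apply/negP => /andP[/R_real hy /pair_reps_moved/negP].
have sub : R :|: pair_reps iV \subset [set x in qverts].
  apply/subsetP => y; rewrite in_setU inE => /orP[/imsetP[x _ ->]|hy]; first exact: qverts_qmap.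
  by rewrite unfold_in /qverts /qmap (negbTE (pair_reps_moved hy)) /pair_rep hy.
have := subset_leq_card sub; rewrite cardsU RP0 cards0 subn0 cardsE.
by apply: leq_trans; rewrite leq_add2r.
Qed.

Lemma shortest_conj_walk :
  (exists v, iV v != v /\ joined psi NV NE v (iV v)) ->
  exists v s, [/\ walk_ok psi NV NE v s, last v (unzip2 s) = iV v &
    forall u t, walk_ok psi NV NE u t -> last u (unzip2 t) = iV u -> size s <= size t].
Proof.
move=> [v [_ [s0 [hs0 hl0]]]].
pose P n := `[< exists v s, [/\ walk_ok psi NV NE v s, last v (unzip2 s) = iV v & size s = n] >].
have exP : exists n, P n by exists (size s0); apply/asboolP; exists v, s0.
have [m /asboolP[u [s [hs hl <-]]] hmin] := ex_minnP exP.
by exists u, s; split=> // w t ht htl; apply/hmin/asboolP; exists w, t.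
Qed.

(* Otherwise a proper part of the walk, possibly preceded by its first edge, would
   be a shorter walk from a non-real vertex to its conjugate. *)
Lemma shortest_conj_walk_tail v0 e0 v1 s :
  walk_ok psi NV NE v0 ((e0, v1) :: s) -> last v1 (unzip2 s) = iV v0 ->
  (forall u t, walk_ok psi NV NE u t -> last u (unzip2 t) = iV u -> (size s).+1 <= size t) ->
  ~~ has (fun p => edge_orbit e0 p.1) s.
Proof.
move=> /= /and4P[hv0 he0 /eqP hp0 hs] hl hmin; apply/hasP => -[[e w] hin hX].
move: hs hl hmin; case/splitPr: hin => s1 s2.
rewrite walk_cat /unzip2 map_cat last_cat /= -/(unzip2 s1) -/(unzip2 s2).
set y := last v1 (unzip2 s1) => /andP[hs1 /and4P[_ _ /eqP hpe hs2]] hl hmin.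
have short u t : walk_ok psi NV NE u t -> last u (unzip2 t) = iV u ->
    size t <= size s1 + size s2 + 1 -> False.
  by move=> ht htl; have := hmin u t ht htl; rewrite size_cat /=; lia.
have walk0 t : walk_ok psi NV NE v1 t -> walk_ok psi NV NE v0 ((e0, v1) :: t).
  by move=> ht; rewrite /= hv0 he0 hp0 eqxx.
case/orP: hX => /eqP /= he; subst e.
  have /set2P[hw|hw] : w \in [set v0; v1] by rewrite -hp0 hpe set22.
    by subst w; apply: (short v0 s2) => //; rewrite addnAC leq_addl.
  subst w; apply: (short v0 ((e0, v1) :: s2)) => //=; first exact: walk0.
  by rewrite addn1 ltnS leq_addl.
have : y \in psi (iE e0) by rewrite hpe set21.
rewrite psi_conj hp0 imsetU1 imset_set1 => /set2P[hy|hy].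
  by apply: (short v0 ((e0, v1) :: s1)) => //=; [apply: walk0 | rewrite addn1 ltnS leq_addr].
by apply: (short v1 s1) => //; rewrite -addnA leq_addr.
Qed.

Lemma qmap_first_edge v0 e0 v1 s e a b :
  walk_ok psi NV NE v0 ((e0, v1) :: s) -> last v1 (unzip2 s) = iV v0 ->
  ~~ has (fun p => edge_orbit e0 p.1) s ->
  edge_orbit e0 e -> psi e = [set a; b] -> qjoined (edge_orbit e0) (qmap a) (qmap b).
Proof.
move=> /= /and4P[_ _ /eqP hp0 hs] hl havoid hXe hab.
have J : qjoined (edge_orbit e0) (qmap v1) (qmap v0).
  rewrite -[qmap v0]qmap_conj -hl.
  apply: joined_map (ex_intro _ s (conj (walk_avoid hs havoid) erefl)); first exact: qverts_qmap.
  by move=> e' a' b' /andP[_ hX'] hab'; apply: qmap_edge hab' => //; apply: edge_orbit_conj.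
have ends x : x \in [set a; b] -> qmap x \in [set qmap v1; qmap v0].
  rewrite -hab; case/orP: hXe => /eqP->.
    by rewrite hp0 => /set2P[]->; rewrite !inE eqxx ?orbT.
  by rewrite psi_conj hp0 imsetU1 imset_set1 => /set2P[]->; rewrite qmap_conj !inE eqxx ?orbT.
exact: joined_pair J (ends a (set21 a b)) (ends b (set22 a b)).
Qed.

Lemma quotient_bound : connected psi -> #|qverts| <= #|pair_reps iE|.+1.
Proof.
move=> hconn; have -> : #|pair_reps iE| = #|qedges pred0|.
  by apply: eq_card => e; rewrite [e \in qedges _]unfold_in /qedges andbT.
exact: quotient_card_le.
Qed.

Lemma quotient_bound_strict :
  connected psi -> a_inv psi iV iE = 1 -> #|qverts| <= #|pair_reps iE|.
Proof.
move=> hconn; rewrite /a_inv; case: asboolP => // /shortest_conj_walk[v0 [s [hs hl hmin]]] _.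
case: s hs hl hmin => [|[e0 v1] s] hs hl hmin.
  by move: (walk_head hs); rewrite /= /real_vertex -hl eqxx.
have he0 : iE e0 != e0 by case/and4P: hs.
have tail := shortest_conj_walk_tail hs hl hmin.
have quot := quotient_card_le hconn (@edge_orbit_conj e0) (fun _ _ _ => qmap_first_edge hs hl tail).
apply: leq_trans quot _.
set r := pair_rep iE e0; have hr : r \in pair_reps iE by apply: pair_rep_in.
have sub : [set e in qedges (edge_orbit e0)] \subset pair_reps iE :\ r.
  apply/subsetP => e; rewrite inE in_setD1 => /andP[he hXe]; rewrite he andbT.
  by apply: contraNneq hXe => ->; rewrite /r /pair_rep; case: ifP; rewrite /edge_orbit eqxx ?orbT.
by have := subset_leq_card sub; rewrite cardsE (cardsD1 r (pair_reps iE)) hr.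
Qed.

End Quotient.

Section Invariants.

Variables (V E : finType) (psi : E -> {set V}) (iV : V -> V) (iE : E -> E).

Local Notation RV := (real_vertex iV).
Local Notation RE := (nonisolated_real_edge psi iV iE).
Local Notation cR := #|components psi RV RE|.

Lemma comp_genus_eq C : C \in components psi RV RE ->
  (comp_genus psi iV iE C + 1 = (#|[pred e | RE e && (psi e \subset C)]| + 2)%:Z - #|C|%:Z)%R.
Proof.
move=> hC; rewrite /comp_genus /genus (component_n_comp hC).
have -> : #|mem C| = #|C| by [].
have -> : #|fun e => RE e && (psi e \subset C)| = #|[pred e | RE e && (psi e \subset C)]| by [].
by rewrite PoszD; lia.
Qed.

Lemma s_inv_eq : incidence_ok psi ->
  s_inv psi iV iE = ((e_iso psi iV iE + #|RE| + 2 * cR)%:Z - #|RV|%:Z)%R.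
Proof.
move=> Hpsi; have RE_RV e : RE e -> psi e \subset RV by case/andP.
rewrite /s_inv; under eq_bigr => C hC do rewrite (comp_genus_eq hC).
rewrite sumrB -!(big_morph Posz PoszD (erefl (Posz 0))) big_split /= sum_card_components.
(* [set] folds two convertible but syntactically distinct forms of the count for [lia]. *)
rewrite sum_card_component_edges // sum_nat_const; set c := #|components _ _ _|; lia.
Qed.

Lemma card_real_vertices_le : incidence_ok psi -> #|RV| <= #|RE| + cR.
Proof.
move=> Hpsi; have RE_RV e : RE e -> psi e \subset RV by case/andP.
rewrite -(sum_card_components psi RV RE) -(sum_card_component_edges Hpsi RE_RV).
rewrite -sum1_card -big_split; apply: leq_sum => C hC; rewrite /= addn1.
exact: component_card_le hC.
Qed.

Lemma card_edges_real_structure : involutive iE ->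
  #|E| = #|RE| + e_iso psi iV iE + 2 * #|pair_reps iE|.
Proof.
move=> iEK; rewrite -card_moved // -(cardC (real_edge iE)) /e_iso.
rewrite -(cardID (fun e => psi e \subset RV) (real_edge iE)).
by congr (_ + _ + _); apply: eq_card => e; rewrite !unfold_in /= /isolated_real_edge andbC.
Qed.

Lemma card_vertices_real_structure : involutive iV -> #|V| = #|RV| + 2 * #|pair_reps iV|.
Proof. by move=> iVK; rewrite -card_moved // -(cardC RV). Qed.

Lemma g_inv_eq : involutive iV -> involutive iE -> connected psi ->
  g_inv psi = ((#|RE| + e_iso psi iV iE + 2 * #|pair_reps iE| + 1)%:Z
               - (#|RV| + 2 * #|pair_reps iV|)%:Z)%R.
Proof.
move=> iVK iEK [[v _] hconn].
rewrite /g_inv /genus (n_comp_eq1 (r := v)) // -card_edges_real_structure //.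
by rewrite -card_vertices_real_structure //; set cE := #|E|; set cV := #|V|; lia.
Qed.

Lemma a_inv_without_real : incidence_ok psi -> connected psi ->
  cR = 0 -> e_iso psi iV iE = 0 -> a_inv psi iV iE = 1.
Proof.
move=> Hpsi [[v _] hconn] hc hi.
have nonreal x : iV x != x.
  apply/negP => hx; have : component psi RV RE x \in components psi RV RE by apply: imset_f.
  by rewrite (card0_eq hc).
have nonreal_e e : iE e != e.
  apply/negP => he; have [a [b hab]] := incidence_pair e Hpsi.
  case hsub: (psi e \subset RV).
    have ha : a \in RV by apply: (subsetP hsub); rewrite hab set21.
    by move: (nonreal a); rewrite -[iV a == a]/(a \in RV) ha.
  by have := card0_eq hi e; rewrite unfold_in /isolated_real_edge /real_edge he hsub.
rewrite /a_inv; case: asboolP => // [] []; exists v; split; first exact: nonreal.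
by apply: joined_sub (hconn v (iV v)) => x _; [apply: nonreal | apply: nonreal_e].
Qed.

End Invariants.

Local Open Scope ring_scope.

Theorem theorem1 (V E : finType) (psi : E -> {set V}) (iV : V -> V) (iE : E -> E)
  (Hpsi : incidence_ok psi) (Hreal : real_structure psi iV iE)
  (Hconn : connected psi) :
  [/\ (2 %| s_inv psi iV iE - (g_inv psi + 1))%Z,
      0 <= s_inv psi iV iE <= g_inv psi + 1,
      (a_inv psi iV iE = 1%N -> s_inv psi iV iE != g_inv psi + 1)
    & (a_inv psi iV iE = 0%N -> s_inv psi iV iE != 0)].
Proof.
have [iVK iEK psi_conj] := Hreal.
have real_le := card_real_vertices_le iV iE Hpsi.
have quot_le := leq_trans (card_qverts psi iE iVK) (quotient_bound iVK iEK psi_conj Hconn).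
rewrite (s_inv_eq iV iE Hpsi) (g_inv_eq iVK iEK Hconn); split.
- apply/dvdzP; set c := #|components _ _ _|.
  by exists (c%:Z + #|pair_reps iV|%:Z - #|pair_reps iE|%:Z - 1); lia.
- by apply/andP; split; lia.
- move=> /(quotient_bound_strict iVK iEK psi_conj Hconn).
  move/(leq_trans (card_qverts psi iE iVK)) => quot_lt; apply/negP => /eqP; lia.
- move=> a0; apply/negP => /eqP s0.
  have := @a_inv_without_real _ _ psi iV iE Hpsi Hconn; rewrite a0; lia.
Qed.
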